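(* Let $\mathcal{X}=\{1,\ldots,n\}$, let $p=(p(1),\ldots,p(n))$ be a probability vector with $p(1)\geq\cdots\geq p(n)>0$ (the prior of $X$), and let $k<n$ be a positive integer. Let $j^*:=\min\{j:1\leq j\leq k,\ p(j)\leq \sum_{i=j}^n p(i)/(k-j+1)\}$ and let $\pi=(\pi_1,\ldots,\pi_k)$ with $\pi_l=p(l)$ for $l\leq j^*-1$ and $\pi_l=\sum_{i=j^*}^n p(i)/(k-j^*+1)$ for $j^*\leq l\leq k$. Then for every generalised entropy $(\eta,F)$ and every feasible channel, $H(X\mid Y)\leq H(\pi)=\eta(F(\pi))$.
   Context: Generalised entropy: a pair $(\eta,F)$ where $F$ is a bounded real-valued function on probability vectors of every finite length that is symmetric (unchanged by permuting entries) and expansible (unchanged by appending zero entries), and $\eta$ is a real function, such that either $\eta$ is increasing and $F$ concave, or $\eta$ is decreasing and $F$ convex. $H(X\mid Y)=\eta\big(\sum_{y:\,p(y)>0}p(y)F(p_{X\mid y})\big)$ with $p_{X\mid y}=(p(x\mid y))_{x\in\mathcal{X}}$. A channel is a discrete output set $\mathcal{Y}$ with conditional probabilities $p(y\mid x)\geq0$, $\sum_y p(y\mid x)=1$; $Y$ is its output when the input is $X\sim p$, with $p(y)=\sum_x p(x)p(y\mid x)$ and $p(x\mid y)=p(x)p(y\mid x)/p(y)$. The pre-image of $y$ is $\{x:p(y\mid x)>0\}$; the channel is feasible if every pre-image has at most $k$ elements. *)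

From HB Require Import structures.
From mathcomp Require Import all_boot all_order all_algebra.
From mathcomp Require Import all_classical all_reals all_analysis.
Set Implicit Arguments. Unset Strict Implicit. Unset Printing Implicit Defensive.
Import Order.TTheory GRing.Theory Num.Theory.
Import numFieldNormedType.Exports.
Local Open Scope classical_set_scope.
Local Open Scope ring_scope.

Section GenEnt.
Variable R : realType.

Definition prob_vec (s : seq R) : Prop :=
  (forall x, x \in s -> 0 <= x) /\ \sum_(x <- s) x = 1.

Definition F_bounded (F : seq R -> R) : Prop :=
  exists M : R, forall s, prob_vec s -> `|F s| <= M.

Definition F_symmetric (F : seq R -> R) : Prop :=
  forall s t, prob_vec s -> perm_eq s t -> F s = F t.

Definition F_expansible (F : seq R -> R) : Prop :=
  forall s m, prob_vec s -> F (s ++ nseq m 0) = F s.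

Definition mix (lam : R) (s t : seq R) : seq R :=
  [seq lam * a.1 + (1 - lam) * a.2 | a <- zip s t].

Definition F_concave (F : seq R -> R) : Prop :=
  forall s t (lam : R), prob_vec s -> prob_vec t -> size s = size t ->
    0 <= lam <= 1 -> lam * F s + (1 - lam) * F t <= F (mix lam s t).

Definition F_convex (F : seq R -> R) : Prop :=
  forall s t (lam : R), prob_vec s -> prob_vec t -> size s = size t ->
    0 <= lam <= 1 -> F (mix lam s t) <= lam * F s + (1 - lam) * F t.

Definition eta_increasing (eta : R -> R) : Prop := forall x y, x <= y -> eta x <= eta y.
Definition eta_decreasing (eta : R -> R) : Prop := forall x y, x <= y -> eta y <= eta x.

Definition gen_entropy (eta : R -> R) (F : seq R -> R) : Prop :=
  [/\ F_bounded F, F_symmetric F, F_expansible F &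
      (eta_increasing eta /\ F_concave F) \/ (eta_decreasing eta /\ F_convex F)].

(* Channels with input set {0,..,n-1} and (countable) output set nat:
   W x y = p(y | x). *)
Definition is_channel (n : nat) (W : nat -> nat -> R) : Prop :=
  (forall x y, (x < n)%N -> 0 <= W x y) /\
  (forall x, (x < n)%N -> (fun m => \sum_(0 <= y < m) W x y) @ \oo --> (1 : R)).

Definition feasible (n k : nat) (W : nat -> nat -> R) : Prop :=
  forall y, leq (count (fun x => 0 < W x y) (iota 0 n)) k.

(* output distribution p(y) for prior p (x = 0 .. size p - 1) *)
Definition out_prob (p : seq R) (W : nat -> nat -> R) (y : nat) : R :=
  \sum_(0 <= x < size p) p`_x * W x y.

Definition post (p : seq R) (W : nat -> nat -> R) (y : nat) : seq R :=
  [seq p`_x * W x y / out_prob p W y | x <- iota 0 (size p)].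

Definition cond_entropy (eta : R -> R) (F : seq R -> R) (p : seq R)
    (W : nat -> nat -> R) : R :=
  eta (limn (fun m => \sum_(0 <= y < m)
         (if 0 < out_prob p W y then out_prob p W y * F (post p W y) else 0))).

(* j* (0-based: paper's j* minus 1) *)
Definition jstar (p : seq R) (k : nat) : nat :=
  find (fun j => p`_j <= (\sum_(j <= i < size p) p`_i) / (k - j)%:R) (iota 0 k).

Definition pi_vec (p : seq R) (k : nat) : seq R :=
  let j := jstar p k in
  [seq (if (l < j)%N then p`_l else (\sum_(j <= i < size p) p`_i) / (k - j)%:R)
  | l <- iota 0 k].

End GenEnt.

From HB Require Import structures.
From mathcomp Require Import all_boot all_order all_algebra.
From mathcomp Require Import all_classical all_reals all_analysis.
From mathcomp Require Import ring lra zify.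
Import Order.TTheory GRing.Theory Num.Theory.
Import numFieldNormedType.Exports.
Local Open Scope classical_set_scope.
Local Open Scope ring_scope.
Set Implicit Arguments. Unset Strict Implicit.

(* By feasibility each posterior p_{X|y} has at most k nonzero entries, so by
   symmetry and expansibility F(p_{X|y}) = F(u_y) for a length-k probability
   vector u_y that dominates p_{X|y} on the first k coordinates. By Jensen the
   p(y)-average of F(u_y) is at most F of the mixture of the u_y, and that
   mixture dominates p on the coordinates l < j*. The vector pi agrees with p
   there and is constant and minimal elsewhere, so the mixture is turned into
   pi by finitely many Robin Hood transfers, none of which decreases a concave
   symmetric F. Infinitely many outputs are handled by truncation: the mass
   missing from the first N outputs becomes one extra output, whose weight
   vanishes as N grows. The convex case is the concave one applied to -F. *)

Lemma count_lt_sub (T : eqType) (P Q : pred T) (s : seq T) z :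
  {in s, subpred Q P} -> z \in s -> P z -> ~~ Q z -> (count Q s < count P s)%N.
Proof.
elim: s => //= y s IH QP; rewrite inE => /predU1P [<- Pz nQz | zs Pz nQz].
  rewrite Pz (negPf nQz) add0n ltnS.
  rewrite -(@eq_in_count _ [pred x | Q x && (x \in s)]) => [|x xs]; last by rewrite /= xs andbT.
  by apply: sub_count => x /andP [Qx xs]; apply: QP; rewrite // inE xs orbT.
rewrite -addnS leq_add //; last first.
  by apply: IH => // x xs; apply: QP; rewrite inE xs orbT.
by case: (boolP (Q y)) => // /(QP y (mem_head _ _)) ->.
Qed.

Section NatSums.
Variable R : numDomainType.

Lemma sumr_nat_ge0 (f : nat -> R) a b :
  (forall i, (a <= i < b)%N -> 0 <= f i) -> 0 <= \sum_(a <= i < b) f i.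
Proof.
move=> f_ge0; rewrite big_seq_cond; apply: sumr_ge0 => i /andP [].
by rewrite mem_index_iota => /f_ge0.
Qed.

Lemma psumr_nat_eq0 (f : nat -> R) m :
  (forall i, (i < m)%N -> 0 <= f i) -> \sum_(0 <= i < m) f i = 0 ->
  forall i, (i < m)%N -> f i = 0.
Proof.
move=> f_ge0; rewrite big_mkord => /(psumr_eq0P (fun (j : 'I_m) _ => f_ge0 j (ltn_ord j))).
by move=> f_eq0 i im; exact: (f_eq0 (Ordinal im)).
Qed.

End NatSums.

Lemma sumr_nat_eq_exists_lt (R : realDomainType) (u v : nat -> R) m i0 :
  (i0 < m)%N -> u i0 != v i0 ->
  \sum_(0 <= i < m) u i = \sum_(0 <= i < m) v i ->
  exists2 a, (a < m)%N & v a < u a.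
Proof.
move=> i0m uv_i0 sum_uv.
case: (boolP [exists a : 'I_m, v a < u a]) => [/existsP [a vua] | /existsPn no_a].
  by exists a.
have le_uv i : (i < m)%N -> 0 <= v i - u i.
  by move=> im; have := no_a (Ordinal im); rewrite subr_ge0 leNgt.
have := psumr_nat_eq0 le_uv _ i0m; rewrite sumrB sum_uv subrr => /(_ erefl) /eqP.
by rewrite subr_eq0 eq_sym (negPf uv_i0).
Qed.

Section ProbVec.
Variable R : realType.
Implicit Types (f g : nat -> R) (s t : seq R).

Lemma sum_mkseq f m : \sum_(x <- mkseq f m) x = \sum_(0 <= i < m) f i.
Proof. by rewrite big_map /index_iota subn0. Qed.

Lemma prob_vec_mkseqP f m :
  prob_vec (mkseq f m) <->
  (forall i, (i < m)%N -> 0 <= f i) /\ \sum_(0 <= i < m) f i = 1.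
Proof.
rewrite /prob_vec sum_mkseq; split=> [[f_ge0 f_sum] | [f_ge0 f_sum]]; split=> //.
  by move=> i im; apply: f_ge0; apply: map_f; rewrite mem_iota.
by move=> x /mapP [i]; rewrite mem_iota => /andP [_ im] ->; apply: f_ge0.
Qed.

Lemma prob_vec_perm s t : prob_vec s -> perm_eq s t -> prob_vec t.
Proof.
move=> [s_ge0 s_sum] st; split; last by rewrite -(perm_big _ st).
by move=> x; rewrite -(perm_mem st); apply: s_ge0.
Qed.

Lemma prob_vec_cat_nseq0 s m : prob_vec (s ++ nseq m 0) -> prob_vec s.
Proof.
move=> [s_ge0 s_sum]; split=> [x xs|]; first by apply: s_ge0; rewrite mem_cat xs.
by rewrite -s_sum big_cat /= [X in _ + X]big1_seq ?addr0 // => x /andP [_ /nseqP []].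
Qed.

Lemma mix_mkseq lam f g m :
  mix lam (mkseq f m) (mkseq g m) = mkseq (fun i => lam * f i + (1 - lam) * g i) m.
Proof. by rewrite /mix /mkseq; elim: (iota 0 m) => //= i s ->. Qed.

Lemma prob_vec_mix lam f g m :
  prob_vec (mkseq f m) -> prob_vec (mkseq g m) -> 0 <= lam <= 1 ->
  prob_vec (mix lam (mkseq f m) (mkseq g m)).
Proof.
move=> /prob_vec_mkseqP [f_ge0 f_sum] /prob_vec_mkseqP [g_ge0 g_sum] /andP [lam_ge0 lam_le1].
rewrite mix_mkseq; apply/prob_vec_mkseqP; split=> [i im|].
  by apply: addr_ge0; apply: mulr_ge0; rewrite ?subr_ge0 ?f_ge0 ?g_ge0.
by rewrite big_split /= -!mulr_sumr f_sum g_sum !mulr1 subrKC.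
Qed.

Definition mixture (N : nat) (w : nat -> R) (u : nat -> nat -> R) (i : nat) : R :=
  \sum_(0 <= y < N) w y * u y i.

Lemma mixtureS N w u i : mixture N.+1 w u i = mixture N w u i + w N * u N i.
Proof. by rewrite /mixture big_nat_recr. Qed.

Lemma prob_vec_mixture N m (w : nat -> R) (u : nat -> nat -> R) :
  (forall y, (y < N)%N -> 0 <= w y) -> \sum_(0 <= y < N) w y = 1 ->
  (forall y, (y < N)%N -> prob_vec (mkseq (u y) m)) ->
  prob_vec (mkseq (mixture N w u) m).
Proof.
move=> w_ge0 w_sum u_prob; apply/prob_vec_mkseqP; split=> [i im|].
  apply: sumr_nat_ge0 => y /andP [_ yN]; apply: mulr_ge0; first exact: w_ge0.
  by have /prob_vec_mkseqP [u_ge0 _] := u_prob y yN; apply: u_ge0.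
rewrite /mixture exchange_big_nat /= -w_sum; apply: eq_big_nat => y /andP [_ yN].
by have /prob_vec_mkseqP [_ u_sum] := u_prob y yN; rewrite -mulr_sumr u_sum mulr1.
Qed.

Lemma exists_prob_vec_ge (r : nat -> R) (d : R) j m : (j < m)%N ->
  (forall i, (i < j)%N -> 0 <= r i) -> \sum_(0 <= i < j) r i <= d ->
  exists t : nat -> R, prob_vec (mkseq t m) /\ forall i, (i < j)%N -> r i <= d * t i.
Proof.
move=> jm r_ge0 r_le_d; set S := \sum_(0 <= i < j) r i in r_le_d.
have S_ge0 : 0 <= S by apply: sumr_nat_ge0 => i /andP [_ /r_ge0].
pose d' := if 0 < d then d else 1.
have d'_gt0 : 0 < d' by rewrite /d'; case: ifP.
have S_le_d' : S <= d' by rewrite /d'; case: ifP => // /negbT; rewrite -leNgt; lra.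
exists (fun i => (if (i < j)%N then r i else if i == j then d' - S else 0) / d'); split.
  apply/prob_vec_mkseqP; split=> [i _|].
    rewrite divr_ge0 ?(ltW d'_gt0) //.
    by case: ltnP => [/r_ge0 | _] //; case: eqP; rewrite ?subr_ge0.
  rewrite -mulr_suml (big_cat_nat _ (n := j)) ?(ltnW jm) //= [in X in _ + X]big_ltn // ltnn eqxx.
  rewrite [X in _ + (_ + X)]big1_seq => [|i /andP [_]]; last first.
    by rewrite mem_index_iota => /andP [ji _]; rewrite ltnNge ltnW // gtn_eqF.
  rewrite (@eq_big_nat _ _ _ 0 j _ r) => [|i /andP [_ ->] //].
  by rewrite -/S addr0 addrC subrK divff ?gt_eqF.
move=> i ij; rewrite ij /d'; case: ifP => [d_gt0 | /negbT]; first by rewrite mulrC divfK ?gt_eqF.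
rewrite -leNgt => d_le0; have S0 : S = 0 by apply/eqP; rewrite eq_le S_ge0 andbT; lra.
by rewrite (psumr_nat_eq0 r_ge0 S0 ij) divr1 mulr0.
Qed.

End ProbVec.

Definition swapn (a b i : nat) : nat := if i == a then b else if i == b then a else i.

Lemma swapnK a b : involutive (swapn a b).
Proof.
move=> i; rewrite /swapn.
case: (eqVneq i a) => [->|ia]; first by rewrite eqxx; case: eqVneq.
case: (eqVneq i b) => [->|ib]; first by rewrite eqxx.
by rewrite (negPf ia) (negPf ib).
Qed.

Lemma swapn_lt a b n i : (a < n)%N -> (b < n)%N -> (i < n)%N -> (swapn a b i < n)%N.
Proof. by rewrite /swapn; case: eqVneq => // _; case: eqVneq. Qed.

Lemma perm_mkseq_swapn (T : eqType) (f : nat -> T) a b m :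
  (a < m)%N -> (b < m)%N -> perm_eq (mkseq (f \o swapn a b) m) (mkseq f m).
Proof.
move=> am bm; rewrite /mkseq map_comp; apply: perm_map.
have swap_inj := inv_inj (swapnK a b).
apply: uniq_perm; rewrite ?(map_inj_uniq swap_inj) ?iota_uniq // => i.
rewrite -{1}(swapnK a b i) (mem_map swap_inj) !mem_iota /= /swapn.
by case: eqVneq => [->|_]; [|case: eqVneq => [->|]]; rewrite ?am ?bm.
Qed.

Section Transfer.
Variable R : realType.

Definition transfer (a b : nat) (d : R) (x : nat -> R) (i : nat) : R :=
  if i == a then x a - d else if i == b then x b + d else x i.

Lemma transfer_mix a b d (x : nat -> R) m : a != b -> x b < x a ->
  mkseq (transfer a b d x) m =
  mix (1 - d / (x a - x b)) (mkseq x m) (mkseq (x \o swapn a b) m).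
Proof.
move=> ab xba; rewrite mix_mkseq; apply: eq_mkseq => i /=.
have xab_neq0 : x a - x b != 0 by rewrite subr_eq0 gt_eqF.
rewrite /transfer /swapn; case: eqVneq => [->|ia]; first by field.
by case: eqVneq => [->|ib]; [field | ring].
Qed.

Lemma onem_divr_itv (d c : R) : 0 < c -> 0 <= d <= c -> 0 <= 1 - d / c <= 1.
Proof.
move=> c_gt0 /andP [d_ge0 d_le_c].
by rewrite subr_ge0 ler_pdivrMr // mul1r d_le_c gerBl divr_ge0 // ltW.
Qed.

Lemma prob_vec_transfer m a b d (x : nat -> R) :
  (a < m)%N -> (b < m)%N -> a != b -> x b < x a -> 0 <= d <= x a - x b ->
  prob_vec (mkseq x m) -> prob_vec (mkseq (transfer a b d x) m).
Proof.
move=> am bm ab xba d_itv x_prob; rewrite transfer_mix //.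
apply: prob_vec_mix => //; last by apply: onem_divr_itv; rewrite ?subr_gt0.
by apply: prob_vec_perm x_prob _; rewrite perm_sym perm_mkseq_swapn.
Qed.

End Transfer.

Section ConcaveSymmetric.
Variables (R : realType) (G : seq R -> R).
Hypotheses (G_concave : F_concave G) (G_sym : F_symmetric G).

Lemma concave_sym_le_transfer m a b d (x : nat -> R) :
  (a < m)%N -> (b < m)%N -> a != b -> x b < x a -> 0 <= d <= x a - x b ->
  prob_vec (mkseq x m) -> G (mkseq x m) <= G (mkseq (transfer a b d x) m).
Proof.
move=> am bm ab xba d_itv x_prob.
have x_swap : perm_eq (mkseq x m) (mkseq (x \o swapn a b) m).
  by rewrite perm_sym perm_mkseq_swapn.
have xab_gt0 : 0 < x a - x b by rewrite subr_gt0.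
have lam_itv := onem_divr_itv xab_gt0 d_itv.
have sizes : size (mkseq x m) = size (mkseq (x \o swapn a b) m) by rewrite !size_mkseq.
rewrite transfer_mix //.
apply: le_trans (G_concave x_prob (prob_vec_perm x_prob x_swap) sizes lam_itv).
by rewrite -(G_sym x_prob x_swap) -mulrDl addrC subrK mul1r.
Qed.

Lemma concave_sym_flatten_step m (D : pred nat) (x t : nat -> R) i0 :
  prob_vec (mkseq x m) -> prob_vec (mkseq t m) ->
  (forall i, (i < m)%N -> ~~ D i -> t i <= x i) ->
  (forall a b, (a < m)%N -> (b < m)%N -> D b -> t b <= t a) ->
  (i0 < m)%N -> x i0 != t i0 ->
  exists x' : nat -> R, [/\ prob_vec (mkseq x' m), G (mkseq x m) <= G (mkseq x' m),
    forall i, (i < m)%N -> ~~ D i -> t i <= x' i &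
    (count (fun i => x' i != t i) (iota 0 m) < count (fun i => x i != t i) (iota 0 m))%N].
Proof.
move=> x_prob t_prob t_le_x t_flat i0m x_t_i0.
have /prob_vec_mkseqP [_ x_sum] := x_prob.
have /prob_vec_mkseqP [_ t_sum] := t_prob.
have t_x_i0 : t i0 != x i0 by rewrite eq_sym.
have [a am t_lt_x] := sumr_nat_eq_exists_lt i0m x_t_i0 (etrans x_sum (esym t_sum)).
have [b bm x_lt_t] := sumr_nat_eq_exists_lt i0m t_x_i0 (etrans t_sum (esym x_sum)).
have Db : D b by case: (boolP (D b)) => // /(t_le_x b bm); rewrite leNgt x_lt_t.
have t_ba := t_flat a b am bm Db.
have ab : a != b by apply/eqP => eab; move: t_lt_x; rewrite eab ltNge (ltW x_lt_t).
have xba : x b < x a by apply: lt_le_trans x_lt_t (le_trans t_ba (ltW t_lt_x)).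
pose d := Num.min (x a - t a) (t b - x b).
have d_le_a : d <= x a - t a by rewrite ge_min lexx.
have d_itv : 0 <= d <= x a - x b.
  by apply/andP; split; [rewrite le_min !subr_ge0 !ltW | lra].
pose x' := transfer a b d x.
have x'a : x' a = x a - d by rewrite /x' /transfer eqxx.
have x'b : x' b = x b + d by rewrite /x' /transfer eq_sym (negPf ab) eqxx.
have x'_other i : i != a -> i != b -> x' i = x i.
  by move=> ia ib; rewrite /x' /transfer (negPf ia) (negPf ib).
exists x'; split; first exact: prob_vec_transfer.
- exact: concave_sym_le_transfer.
- move=> i im nDi; case: (eqVneq i a) => [->|ia]; first by rewrite x'a; lra.
  case: (eqVneq i b) => [eib|ib]; first by rewrite eib Db in nDi.
  by rewrite x'_other //; apply: t_le_x.
have [z [zm x'z xz]] : exists z, [/\ (z < m)%N, x' z == t z & x z != t z].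
  case: (leP (x a - t a) (t b - x b)) => [ab_le | ba_lt].
    exists a; split=> //; last by rewrite gt_eqF.
    by rewrite x'a /d (min_idPl ab_le); apply/eqP; ring.
  exists b; split=> //; last by rewrite lt_eqF.
  by rewrite x'b /d (min_idPr (ltW ba_lt)); apply/eqP; ring.
apply: (count_lt_sub (z := z)); rewrite ?mem_iota ?x'z // => i _.
apply: contraNneq => x_eq_t; case: (eqVneq i a) => [eia|ia].
  by move: t_lt_x; rewrite -eia x_eq_t ltxx.
case: (eqVneq i b) => [eib|ib]; last by rewrite x'_other // x_eq_t eqxx.
by move: x_lt_t; rewrite -eib x_eq_t ltxx.
Qed.

Lemma concave_sym_le_flatter m (D : pred nat) (x t : nat -> R) :
  prob_vec (mkseq x m) -> prob_vec (mkseq t m) ->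
  (forall i, (i < m)%N -> ~~ D i -> t i <= x i) ->
  (forall a b, (a < m)%N -> (b < m)%N -> D b -> t b <= t a) ->
  G (mkseq x m) <= G (mkseq t m).
Proof.
move=> + t_prob + t_flat.
have [c] := ubnP (count (fun i => x i != t i) (iota 0 m)).
elim: c x => // c IH x; rewrite ltnS => x_cnt x_prob t_le_x.
have [/hasP [i0] | /hasPn x_eq_t] := boolP (has (fun i => x i != t i) (iota 0 m)); last first.
  suff -> : mkseq x m = mkseq t m by [].
  by apply/eq_in_map => i /x_eq_t /negbNE /eqP.
rewrite mem_iota add0n => /andP [_ i0m] x_t_i0.
have [x' [x'_prob x_le_x' t_le_x' x'_cnt]] :=
  concave_sym_flatten_step x_prob t_prob t_le_x t_flat i0m x_t_i0.
by apply: le_trans x_le_x' (IH x' (leq_trans x'_cnt x_cnt) x'_prob t_le_x').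
Qed.

Lemma concave_jensen N m (w : nat -> R) (u : nat -> nat -> R) :
  (forall y, (y < N)%N -> 0 <= w y) -> \sum_(0 <= y < N) w y = 1 ->
  (forall y, (y < N)%N -> prob_vec (mkseq (u y) m)) ->
  \sum_(0 <= y < N) w y * G (mkseq (u y) m) <= G (mkseq (mixture N w u) m).
Proof.
elim: N w => [|N IH] w w_ge0 w_sum u_prob.
  by move: w_sum; rewrite big_geq // => /eqP; rewrite eq_sym oner_eq0.
have w_ge0' y : (y < N)%N -> 0 <= w y by move=> yN; apply/w_ge0/leqW.
have u_prob' y : (y < N)%N -> prob_vec (mkseq (u y) m) by move=> yN; apply/u_prob/leqW.
move: w_sum; rewrite !big_nat_recr //=; set S := \sum_(0 <= y < N) w y => w_sum.
have S_ge0 : 0 <= S by apply: sumr_nat_ge0 => y /andP [_ /w_ge0'].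
rewrite (eq_mkseq (mixtureS N w u)); have [S0 | S_neq0] := eqVneq S 0.
  have w0 := psumr_nat_eq0 w_ge0' S0.
  have mix0 i : mixture N w u i = 0.
    by rewrite /mixture big_nat_cond big1 // => y /andP [/andP [_ /w0 ->] _]; rewrite mul0r.
  have wN : w N = 1 by rewrite -w_sum S0 add0r.
  have -> : mkseq (fun i => mixture N w u i + w N * u N i) m = mkseq (u N) m.
    by apply: eq_mkseq => i; rewrite mix0 wN add0r mul1r.
  rewrite big_nat_cond big1 => [|y /andP [/andP [_ /w0 ->] _]]; last by rewrite mul0r.
  by rewrite wN add0r mul1r.
pose w' y := w y / S.
have w'_sum : \sum_(0 <= y < N) w' y = 1 by rewrite -mulr_suml divff.
have w'_ge0 y : (y < N)%N -> 0 <= w' y by move=> yN; rewrite divr_ge0 ?w_ge0'.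
have mix' i : mixture N w u i = S * mixture N w' u i.
  by rewrite /mixture mulr_sumr; apply: eq_bigr => y _; rewrite /w'; field.
have lam_itv : 0 <= w N <= 1 by rewrite w_ge0 //= -w_sum lerDr.
have sizes : size (mkseq (u N) m) = size (mkseq (mixture N w' u) m) by rewrite !size_mkseq.
have := G_concave (u_prob N (ltnSn N)) (prob_vec_mixture w'_ge0 w'_sum u_prob') sizes lam_itv.
rewrite mix_mkseq (_ : 1 - w N = S); last by rewrite -w_sum addrK.
have -> : mkseq (fun i => w N * u N i + S * mixture N w' u i) m =
          mkseq (fun i => mixture N w u i + w N * u N i) m.
  by apply: eq_mkseq => i; rewrite mix' addrC.
apply: le_trans; rewrite addrC lerD2l.
have -> : \sum_(0 <= y < N) w y * G (mkseq (u y) m) =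
          S * \sum_(0 <= y < N) w' y * G (mkseq (u y) m).
  by rewrite mulr_sumr; apply: eq_bigr => y _; rewrite /w'; field.
by rewrite mulrC [X in _ <= X]mulrC ler_wpM2r ?IH.
Qed.

End ConcaveSymmetric.

Section CompressSupport.
Variable R : realDomainType.
Implicit Type v : nat -> R.

Lemma mkseq_zero_tail v k n : (k <= n)%N ->
  (forall i, (k <= i < n)%N -> v i = 0) -> mkseq v n = mkseq v k ++ nseq (n - k) 0.
Proof.
move=> kn v0; rewrite /mkseq -{1}(subnKC kn) iotaD map_cat add0n; congr (_ ++ _).
apply: (@eq_from_nth _ 0); rewrite size_map size_iota ?size_nseq // => i ilt.
by rewrite nth_nseq ilt (nth_map 0) ?size_iota // nth_iota // v0 //; lia.
Qed.

Lemma exists_head_zero v k n b : (k <= n)%N -> (forall i, (i < n)%N -> 0 <= v i) ->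
  (count (fun i => (0 < v i)%R) (iota 0 n) <= k)%N -> (k <= b < n)%N -> 0 < v b ->
  exists2 a, (a < k)%N & v a = 0.
Proof.
move=> kn v_ge0 v_cnt /andP [kb bn] vb_gt0.
have tail_pos : (0 < count (fun i => (0 < v i)%R) (iota k (n - k)))%N.
  by rewrite -has_count; apply/hasP; exists b; rewrite // mem_iota subnKC ?kb.
have /hasP [a] : has (predC (fun i => 0 < v i)) (iota 0 k).
  move: v_cnt (count_predC (fun i => 0 < v i) (iota 0 k)).
  by rewrite -{1}(subnKC kn) iotaD add0n count_cat size_iota has_count; lia.
rewrite mem_iota => /andP [_ ak] /= va; exists a => //.
by apply/eqP; rewrite eq_le leNgt va v_ge0 //; apply: leq_trans kn.
Qed.

Lemma compress_support v k n : (k <= n)%N -> (forall i, (i < n)%N -> 0 <= v i) ->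
  (count (fun i => (0 < v i)%R) (iota 0 n) <= k)%N ->
  exists u : nat -> R,
    perm_eq (mkseq u k ++ nseq (n - k) 0) (mkseq v n) /\ forall i, (i < k)%N -> v i <= u i.
Proof.
move=> kn; have [c] := ubnP (count (fun i => 0 < v i) (iota k (n - k))).
elim: c v => // c IH v; rewrite ltnS => tail_cnt v_ge0 v_cnt.
have [/hasP [b] | /hasPn tail0] := boolP (has (fun i => 0 < v i) (iota k (n - k))); last first.
  exists v; split=> //; rewrite (mkseq_zero_tail kn) // => i /andP [ki i_n].
  have /tail0 : i \in iota k (n - k) by rewrite mem_iota subnKC ?ki.
  by move=> vi; apply/eqP; rewrite eq_le leNgt vi v_ge0.
rewrite mem_iota subnKC // => /andP [kb bn] vb_gt0.
have [a ak va0] := exists_head_zero kn v_ge0 v_cnt (introT andP (conj kb bn)) vb_gt0.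
have an : (a < n)%N by apply: leq_trans kn.
have ab : a != b by apply: contraTneq ak => ->; rewrite -leqNgt.
pose v' := v \o swapn a b.
have v'a : v' a = v b by rewrite /v' /= /swapn eqxx.
have v'b : v' b = v a by rewrite /v' /= /swapn eq_sym (negPf ab) eqxx.
have v'_other i : i != a -> i != b -> v' i = v i.
  by move=> ia ib; rewrite /v' /= /swapn (negPf ia) (negPf ib).
have v_perm : perm_eq (mkseq v' n) (mkseq v n) by apply: perm_mkseq_swapn.
have [u [u_perm u_ge]] : exists u : nat -> R,
    perm_eq (mkseq u k ++ nseq (n - k) 0) (mkseq v' n) /\ forall i, (i < k)%N -> v' i <= u i.
  apply: IH => [|i i_n|]; last 2 first.
  - by apply: v_ge0; apply: swapn_lt.
  - by rewrite -(count_map _ (fun x => 0 < x)) (permP v_perm) count_map.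
  apply: leq_trans tail_cnt; apply: (count_lt_sub (z := b)); rewrite ?mem_iota ?subnKC //.
  - move=> i; rewrite mem_iota => /andP [ki _] /=.
    have ia : i != a by apply: contraTneq ki => ->; rewrite -ltnNge.
    by case: (eqVneq i b) => [->|ib]; rewrite ?v'b ?va0 ?ltxx // v'_other.
  - by rewrite kb bn.
  - by rewrite /= v'b va0 ltxx.
exists u; split; first exact: perm_trans u_perm v_perm.
move=> i ik; apply: le_trans (u_ge i ik).
case: (eqVneq i a) => [->|ia]; first by rewrite v'a va0 ltW.
have ib : i != b by apply: contraTneq ik => ->; rewrite -leqNgt.
by rewrite v'_other.
Qed.

End CompressSupport.

Section WaterFilling.
Variables (R : realType) (p : seq R) (k : nat).
Hypotheses (k_gt0 : (0 < k)%N) (k_le : (k <= size p)%N) (p_ge0 : forall x, x \in p -> 0 <= x).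

Definition pi_tail : R := (\sum_(jstar p k <= i < size p) p`_i) / (k - jstar p k)%:R.

Definition pi_at (l : nat) : R := if (l < jstar p k)%N then p`_l else pi_tail.

Lemma pi_vecE : pi_vec p k = mkseq pi_at k.
Proof. by []. Qed.

Lemma nth_ge0 i : 0 <= p`_i.
Proof. by case: (ltnP i (size p)) => [/(mem_nth 0)/p_ge0 | /(nth_default 0) ->]. Qed.

Lemma jstar_lt : (jstar p k < k)%N.
Proof.
rewrite /jstar -[X in (_ < X)%N](size_iota 0 k) -has_find; apply/hasP.
exists k.-1; first by rewrite mem_iota; lia.
rewrite (_ : (k - k.-1)%N = 1%N) ?divr1; last by lia.
rewrite big_ltn; last by lia.
by rewrite lerDl sumr_nat_ge0 // => i _; apply: nth_ge0.
Qed.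

Lemma pi_tail_ge0 : 0 <= pi_tail.
Proof. by rewrite divr_ge0 // sumr_nat_ge0 // => i _; apply: nth_ge0. Qed.

Lemma pi_tail_le_head (p_sorted : sorted (fun a b : R => b <= a) p) l :
  (l < jstar p k)%N -> pi_tail <= p`_l.
Proof.
have j_lt := jstar_lt; rewrite /pi_tail.
have := @before_find _ 0%N (fun j => p`_j <= (\sum_(j <= i < size p) p`_i) / (k - j)%:R) (iota 0 k).
rewrite -/(jstar p k); case: (jstar p k) j_lt => [//|j] j_lt jstar_min l_le_j.
have jk : (j < k)%N by apply: ltnW.
move: (jstar_min j (ltnSn j)); rewrite nth_iota // add0n big_ltn; last by lia.
rewrite (_ : (k - j)%N = (k - j.+1).+1); last by lia.
set S := \sum_(j.+1 <= i < size p) p`_i; set K := (k - j.+1)%:R.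
have K_gt0 : 0 < K by rewrite ltr0n subn_gt0.
move/negbT; rewrite -ltNge -natr1 -/K ltr_pdivrMr ?ltr_wpDl // => tail_lt.
have pj_le_pl : p`_j <= p`_l.
  have ge_trans : transitive (fun a b : R => b <= a).
    by move=> y x z xy yz; apply: le_trans yz xy.
  by apply: (sorted_leq_nth ge_trans (@lexx _ _) 0 p_sorted); rewrite ?inE; lia.
by apply: le_trans pj_le_pl; rewrite ler_pdivrMr //; lra.
Qed.

Lemma prob_vec_pi (p_sum1 : \sum_(x <- p) x = 1) : prob_vec (pi_vec p k).
Proof.
rewrite pi_vecE; apply/prob_vec_mkseqP; split=> [i _|].
  by rewrite /pi_at; case: ifP => _; [apply: nth_ge0 | apply: pi_tail_ge0].
have j_lt := jstar_lt.
rewrite (big_cat_nat _ (n := jstar p k)) //=; last exact: ltnW.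
rewrite (@eq_big_nat _ _ _ 0 (jstar p k) _ (nth 0 p)); last first.
  by move=> i /andP [_ i_lt]; rewrite /pi_at i_lt.
rewrite (@eq_big_nat _ _ _ (jstar p k) k _ (fun=> pi_tail)); last first.
  by move=> i /andP [j_le _]; rewrite /pi_at ltnNge j_le.
rewrite sumr_const_nat /pi_tail -[_ / _ *+ _]mulr_natr divfK ?pnatr_eq0 -?lt0n ?subn_gt0 //.
by rewrite -big_cat_nat ?(leq_trans (ltnW j_lt)) // -p_sum1 [RHS](big_nth 0).
Qed.

End WaterFilling.

Lemma channel_psum_le1 (R : realType) n (W : nat -> nat -> R) x N :
  is_channel n W -> (x < n)%N -> \sum_(0 <= y < N) W x y <= 1.
Proof.
move=> [W_ge0 W_sum] xn; have W_cvg := W_sum x xn.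
have W_mono : {homo (fun m => \sum_(0 <= y < m) W x y) : a b / (a <= b)%N >-> a <= b}.
  move=> a b ab; rewrite [X in _ <= X](big_cat_nat _ ab) //= lerDl.
  by apply: sumr_nat_ge0 => y _; apply: W_ge0.
by rewrite -(cvg_lim _ W_cvg) //; apply: nondecreasing_cvgn_le => //; apply: cvgP W_cvg.
Qed.

Section Posterior.
Variables (R : realType) (p : seq R) (k : nat) (W : nat -> nat -> R).
Hypotheses (k_gt0 : (0 < k)%N) (k_le : (k <= size p)%N)
  (p_ge0 : forall x, x \in p -> 0 <= x) (p_sum1 : \sum_(x <- p) x = 1)
  (p_sorted : sorted (fun a b : R => b <= a) p)
  (W_channel : is_channel (size p) W) (W_feasible : feasible (size p) k W).

Local Notation n := (size p).
Local Notation w := (out_prob p W).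

Lemma sum_nth_prior : \sum_(0 <= x < n) p`_x = 1.
Proof. by rewrite -p_sum1 [RHS](big_nth 0). Qed.

Lemma joint_ge0 x y : 0 <= p`_x * W x y.
Proof.
case: (ltnP x n) => [xn | /(nth_default (0 : R)) ->]; last by rewrite mul0r.
by apply: mulr_ge0; [apply/p_ge0/mem_nth | apply: W_channel.1].
Qed.

Lemma out_prob_ge0 y : 0 <= w y.
Proof. by apply: sumr_nat_ge0 => x _; apply: joint_ge0. Qed.

Lemma sum_out_prob N :
  \sum_(0 <= y < N) w y = \sum_(0 <= x < n) p`_x * \sum_(0 <= y < N) W x y.
Proof. by rewrite exchange_big_nat; apply: eq_bigr => x _; rewrite mulr_sumr. Qed.

Lemma sum_out_prob_le1 N : \sum_(0 <= y < N) w y <= 1.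
Proof.
rewrite sum_out_prob -sum_nth_prior !big_seq; apply: ler_sum => x.
rewrite mem_index_iota => /andP [_ xn]; apply: ler_piMr; first exact: p_ge0 (mem_nth 0 xn).
exact: channel_psum_le1 W_channel xn.
Qed.

Lemma sum_out_prob_cvg : (fun N => \sum_(0 <= y < N) w y) @ \oo --> (1 : R).
Proof.
under eq_fun do rewrite sum_out_prob big_seq.
rewrite -sum_nth_prior big_seq; apply: cvg_big => [|x]; first exact: add_continuous.
rewrite mem_index_iota => /andP [_ xn]; rewrite -[X in _ --> X]mulr1.
by apply: cvgMr; apply: W_channel.2.
Qed.

Lemma joint_eq0 x y : w y = 0 -> p`_x * W x y = 0.
Proof.
case: (ltnP x n) => [xn | /(nth_default (0 : R)) ->]; last by rewrite mul0r.
by move=> w0; apply: (psumr_nat_eq0 (f := fun x => p`_x * W x y) _ w0) => // i _; apply: joint_ge0.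
Qed.

Lemma prob_vec_post y : 0 < w y -> prob_vec (post p W y).
Proof.
move=> wy_gt0; apply/prob_vec_mkseqP; split=> [x _|].
  by rewrite divr_ge0 ?joint_ge0 ?out_prob_ge0.
by rewrite -mulr_suml divff ?gt_eqF.
Qed.

Lemma count_post_gt0 y :
  (count (fun x => (0 < p`_x * W x y / w y)%R) (iota 0 n) <= k)%N.
Proof.
apply: leq_trans (W_feasible y); apply: sub_count => x /=; apply: contraTT.
rewrite -!leNgt => W_le0; case: (ltnP x n) => [xn | /(nth_default (0 : R)) ->]; last first.
  by rewrite !mul0r.
suff -> : W x y = 0 by rewrite mulr0 mul0r.
by apply/eqP; rewrite eq_le W_le0 (W_channel.1 x y xn).
Qed.

Lemma exists_residual_vec N : exists t : nat -> R, prob_vec (mkseq t k) /\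
  forall i, (i < jstar p k)%N ->
    p`_i * (1 - \sum_(0 <= y < N) W i y) <= (1 - \sum_(0 <= y < N) w y) * t i.
Proof.
pose r i := p`_i * (1 - \sum_(0 <= y < N) W i y).
have jn : (jstar p k <= n)%N := leq_trans (ltnW (jstar_lt k_gt0 k_le p_ge0)) k_le.
have r_ge0 i : (i < n)%N -> 0 <= r i.
  move=> i_n; rewrite mulr_ge0 ?subr_ge0 ?(channel_psum_le1 _ W_channel) //.
  exact/p_ge0/mem_nth.
apply: exists_prob_vec_ge (jstar_lt k_gt0 k_le p_ge0) _ _ => [i ij|].
  exact/r_ge0/(leq_trans ij jn).
have -> : 1 - \sum_(0 <= y < N) w y = \sum_(0 <= i < n) r i.
  by rewrite sum_out_prob -sum_nth_prior -sumrB; apply: eq_bigr => i _; rewrite /r mulrBr mulr1.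
rewrite [X in _ <= X](big_cat_nat _ (n := jstar p k)) //= lerDl.
by apply: sumr_nat_ge0 => i /andP [_ /r_ge0].
Qed.

Definition cond_term (G : seq R -> R) (y : nat) : R :=
  if 0 < w y then w y * G (post p W y) else 0.

Section ConcaveEntropy.
Variables (G : seq R -> R) (M : R).
Hypotheses (G_concave : F_concave G) (G_sym : F_symmetric G) (G_exp : F_expansible G)
  (G_bounded : forall s, prob_vec s -> `|G s| <= M).

Lemma exists_compressed_post y : exists u : nat -> R,
  prob_vec (mkseq u k) /\
  (0 < w y -> G (mkseq u k) = G (post p W y) /\
              forall i, (i < k)%N -> p`_i * W i y / w y <= u i).
Proof.
case: (ltrP 0 (w y)) => [wy_gt0 | wy_le0]; last first.
  by exists (pi_at p k); split=> //; rewrite -pi_vecE; apply: prob_vec_pi.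
have v_ge0 x : (x < n)%N -> 0 <= p`_x * W x y / w y.
  by rewrite divr_ge0 ?joint_ge0 ?out_prob_ge0.
have [u [u_perm u_ge]] := compress_support k_le v_ge0 (count_post_gt0 y).
have u_prob : prob_vec (mkseq u k ++ nseq (n - k) 0).
  by apply: prob_vec_perm (prob_vec_post wy_gt0) _; rewrite perm_sym.
exists u; split=> [|_]; first exact: prob_vec_cat_nseq0 u_prob.
by rewrite -(G_exp (n - k)%N (prob_vec_cat_nseq0 u_prob)) (G_sym u_prob u_perm).
Qed.

Section Compressed.
Variable U : nat -> nat -> R.
Hypothesis U_spec : forall y, prob_vec (mkseq (U y) k) /\
  (0 < w y -> G (mkseq (U y) k) = G (post p W y) /\
              forall i, (i < k)%N -> p`_i * W i y / w y <= U y i).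

Lemma cond_term_compressed y : cond_term G y = w y * G (mkseq (U y) k).
Proof.
rewrite /cond_term; case: ifPn => [/(U_spec y).2 [-> _] // | wy_le0].
suff -> : w y = 0 by rewrite mul0r.
by apply/eqP; rewrite eq_le out_prob_ge0 andbT leNgt.
Qed.

Lemma joint_le_mixture N i : (i < k)%N ->
  p`_i * \sum_(0 <= y < N) W i y <= mixture N w U i.
Proof.
move=> ik; rewrite mulr_sumr; apply: ler_sum => y _.
case: (ltrP 0 (w y)) => [wy_gt0 | wy_le0].
  rewrite -(divfK (negbT (gt_eqF wy_gt0)) (p`_i * W i y)) mulrC ler_wpM2l ?out_prob_ge0 //.
  exact: ((U_spec y).2 wy_gt0).2.
have wy0 : w y = 0 by apply/eqP; rewrite eq_le wy_le0 out_prob_ge0.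
by rewrite wy0 mul0r joint_eq0.
Qed.

End Compressed.

Lemma concave_le_pi (x : nat -> R) : prob_vec (mkseq x k) ->
  (forall i, (i < jstar p k)%N -> p`_i <= x i) -> G (mkseq x k) <= G (pi_vec p k).
Proof.
move=> x_prob p_le_x; rewrite pi_vecE.
apply: (concave_sym_le_flatter G_concave G_sym (D := fun i => jstar p k <= i)%N) => //.
- by rewrite -pi_vecE; apply: prob_vec_pi.
- by move=> i _; rewrite -ltnNge => ij; rewrite /pi_at ij; apply: p_le_x.
move=> a b _ _ jb; rewrite /pi_at ltnNge jb /=.
by case: ifP => // aj; apply: pi_tail_le_head.
Qed.

Lemma cond_psum_le N : \sum_(0 <= y < N) cond_term G y <=
  G (pi_vec p k) + (1 - \sum_(0 <= y < N) w y) * M.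
Proof.
have [U U_spec] := choice exists_compressed_post.
under eq_bigr do rewrite (cond_term_compressed U_spec).
have [t [t_prob residual_le_t]] := exists_residual_vec N.
set d := 1 - \sum_(0 <= y < N) w y in residual_le_t *.
have d_ge0 : 0 <= d by rewrite subr_ge0 sum_out_prob_le1.
pose om y := if (y < N)%N then w y else d.
pose V y := if (y < N)%N then U y else t.
have om_ge0 y : (y < N.+1)%N -> 0 <= om y by rewrite /om; case: ifP; rewrite ?out_prob_ge0.
have om_sum : \sum_(0 <= y < N.+1) om y = 1.
  rewrite big_nat_recr //= {2}/om ltnn (@eq_big_nat _ _ _ 0 N _ w) => [|y /andP [_ yN]].
    by rewrite /d addrC subrK.
  by rewrite /om yN.
have V_prob y : (y < N.+1)%N -> prob_vec (mkseq (V y) k).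
  by rewrite /V; case: ifP => _ _; [apply: (U_spec y).1 | apply: t_prob].
have mix_V i : mixture N.+1 om V i = mixture N w U i + d * t i.
  rewrite mixtureS /mixture /om /V ltnn; congr (_ + _).
  by apply: eq_big_nat => y /andP [_ ->].
have mix_le_pi : G (mkseq (mixture N.+1 om V) k) <= G (pi_vec p k).
  apply: concave_le_pi => [|i ij]; first exact: prob_vec_mixture om_ge0 om_sum V_prob.
  have ik : (i < k)%N := ltn_trans ij (jstar_lt k_gt0 k_le p_ge0).
  have := joint_le_mixture U_spec N ik; have := residual_le_t i ij.
  by rewrite mix_V; lra.
have := concave_jensen G_concave om_ge0 om_sum V_prob.
rewrite big_nat_recr //= {2}/om {2}/V ltnn.
rewrite (@eq_big_nat _ _ _ 0 N _ (fun y => w y * G (mkseq (U y) k))); last first.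
  by move=> y /andP [_ yN]; rewrite /om /V yN.
have Gt_ge : - M <= G (mkseq t k) by have := G_bounded t_prob; rewrite ler_norml => /andP [].
have dGt_ge : - (d * M) <= d * G (mkseq t k) by rewrite -mulrN ler_wpM2l.
lra.
Qed.

Lemma cond_sum_concave_le :
  cvgn (series (cond_term G)) /\ limn (series (cond_term G)) <= G (pi_vec p k).
Proof.
have M_ge0 : 0 <= M := le_trans (normr_ge0 _) (G_bounded (prob_vec_pi k_gt0 k_le p_ge0 p_sum1)).
have w_cvg := sum_out_prob_cvg.
have term_le y : `|cond_term G y| <= M * w y.
  rewrite /cond_term; case: ifP => [wy_gt0 | _].
    rewrite normrM ger0_norm ?out_prob_ge0 // mulrC ler_wpM2r ?out_prob_ge0 //.
    exact/G_bounded/prob_vec_post.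
  by rewrite normr0 mulr_ge0 ?out_prob_ge0.
have series_cvg : cvgn (series (cond_term G)).
  apply: normed_cvg; apply: (@series_le_cvg _ _ (fun y => M * w y)) => [y|y|y|].
  - exact: normr_ge0.
  - by rewrite mulr_ge0 ?out_prob_ge0.
  - exact: term_le.
  have -> : series (fun y => M * w y) = (fun N => M * \sum_(0 <= y < N) w y).
    by apply: funext => N; rewrite /series /= mulr_sumr.
  by apply: cvgP; apply: cvgM w_cvg; apply: cvg_cst.
have bound_cvg : (fun N => G (pi_vec p k) + (1 - \sum_(0 <= y < N) w y) * M) @ \oo -->
    G (pi_vec p k) + (1 - 1) * M.
  apply: cvgD; first exact: cvg_cst.
  by apply: cvgM; [apply: cvgB; [apply: cvg_cst |] | apply: cvg_cst].
split=> //.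
have <- : limn (fun N => G (pi_vec p k) + (1 - \sum_(0 <= y < N) w y) * M) = G (pi_vec p k).
  by rewrite (cvg_lim _ bound_cvg) // subrr mul0r addr0.
exact: ler_lim series_cvg (cvgP _ bound_cvg) (nearW _ cond_psum_le).
Qed.

End ConcaveEntropy.

Lemma cond_sum_convex_ge (F : seq R -> R) (M : R) :
  F_convex F -> F_symmetric F -> F_expansible F ->
  (forall s, prob_vec s -> `|F s| <= M) ->
  F (pi_vec p k) <= limn (series (cond_term F)).
Proof.
move=> F_convex F_sym F_exp F_bounded.
have [] := cond_sum_concave_le (G := fun s => - F s) (M := M).
- by move=> s t lam s_prob t_prob st lam_itv; have := F_convex _ _ _ s_prob t_prob st lam_itv; lra.
- by move=> s t s_prob st; rewrite (F_sym _ _ s_prob st).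
- by move=> s m s_prob; rewrite F_exp.
- by move=> s s_prob; rewrite normrN F_bounded.
have -> : series (cond_term (fun s => - F s)) = - series (cond_term F).
  apply: funext => N; rewrite opprfctE /series /= -sumrN; apply: eq_bigr => y _.
  by rewrite /cond_term; case: ifP; rewrite ?oppr0 ?mulrN.
by rewrite is_cvgNE => F_cvg; rewrite limN // lerN2.
Qed.

End Posterior.

Theorem lemma1 (R : realType) (p : seq R) (k : nat) (eta : R -> R)
    (F : seq R -> R) (W : nat -> nat -> R) :
  (0 < k)%N -> (k < size p)%N ->
  sorted (fun a b : R => b <= a) p ->
  (forall x, x \in p -> 0 < x) ->
  \sum_(x <- p) x = 1 ->
  gen_entropy eta F ->
  is_channel (size p) W ->
  feasible (size p) k W ->
  cond_entropy eta F p W <= eta (F (pi_vec p k)).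
Proof.
move=> k_gt0 /ltnW k_le p_sorted p_gt0 p_sum1 [[M F_bounded] F_sym F_exp F_shape] W_ch W_feas.
have p_ge0 x : x \in p -> 0 <= x by move/p_gt0/ltW.
have convex_ge := cond_sum_convex_ge k_gt0 k_le p_ge0 p_sum1 p_sorted W_ch W_feas.
have concave_le := cond_sum_concave_le k_gt0 k_le p_ge0 p_sum1 p_sorted W_ch W_feas.
case: F_shape => [[eta_up F_concave] | [eta_down F_convex]].
- exact/eta_up/(concave_le F M F_concave F_sym F_exp F_bounded).2.
- exact/eta_down/(convex_ge F M F_convex F_sym F_exp F_bounded).
Qed.
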